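(* Let $\Omega\subset\mathbb{R}^N$ be a bounded smooth domain, $\gamma\ge0$, $q\in(0,\gamma+1)$, $a\in C(\overline\Omega)$, and let $F$ satisfy (F1) and (F2). Let $u$ be a nontrivial viscosity solution of $(\mathrm{P}_{a,q})$. Then there exists a nonempty open subdomain $\Omega'\subset\Omega^+=\{x\in\Omega:a(x)>0\}$ such that $u>0$ in $\Omega'$.
   Context: $\mathrm{Sym}(N)$ is the space of real symmetric $N\times N$ matrices. For $0<\lambda\le\Lambda$ the Pucci extremal operators are $\mathcal{M}^{+}_{\lambda,\Lambda}(X)=\Lambda\sum_{e_i>0}e_i(X)+\lambda\sum_{e_i<0}e_i(X)$ and $\mathcal{M}^{-}_{\lambda,\Lambda}(X)=\lambda\sum_{e_i>0}e_i(X)+\Lambda\sum_{e_i<0}e_i(X)$. (F1) There are constants $\Lambda\ge\lambda>0$ with $\mathcal{M}^-_{\lambda,\Lambda}(Y)\le F(x,X+Y)-F(x,X)\le\mathcal{M}^+_{\lambda,\Lambda}(Y)$ for all $x\in\Omega$, $X,Y\in\mathrm{Sym}(N)$, $Y\ge0$. (F2) $F(x,sX)=sF(x,X)$ for all $s>0$. Viscosity solutions: for continuous $G(x,r,p,X)$, $u\in C(\Omega)$ is a viscosity supersolution (resp. subsolution) of $G(x,u,Du,D^2u)=0$ if whenever $\phi\in C^2(\Omega)$ and $u-\phi$ has a local minimum (resp. maximum) at $x_0$, then $G(x_0,u(x_0),D\phi(x_0),D^2\phi(x_0))\le0$ (resp. $\ge0$); a solution is both. Problem $(\mathrm{P}_{a,q})$: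 find $u\in C(\overline{\Omega})$, $u\ge0$ in $\Omega$, $u=0$ on $\partial\Omega$, viscosity solution of $|Du|^\gamma F(x,D^2u)+a(x)u^q=0$ in $\Omega$. Nontrivial means $u\not\equiv0$. *)

From mathcomp Require Import ssreflect ssrfun ssrbool eqtype ssrnat seq fintype bigop.
From Stdlib Require Import Reals ClassicalEpsilon.
Set Implicit Arguments.
Unset Strict Implicit.
Open Scope R_scope.

Definition Vec (N : nat) := 'I_N -> R.
Definition Mat (N : nat) := 'I_N -> 'I_N -> R.

Definition sumI {N : nat} (f : 'I_N -> R) : R := \big[Rplus/0]_(i < N) f i.

Definition vadd {N} (x y : Vec N) : Vec N := fun i => x i + y i.
Definition vsub {N} (x y : Vec N) : Vec N := fun i => x i - y i.
Definition vscale {N} (t : R) (x : Vec N) : Vec N := fun i => t * x i.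
Definition evec {N} (i : 'I_N) : Vec N := fun j => if j == i then 1 else 0.
Definition dot {N} (x y : Vec N) : R := sumI (fun i => x i * y i).
Definition vnorm {N} (x : Vec N) : R := sqrt (dot x x).
Definition dist {N} (x y : Vec N) : R := vnorm (vsub x y).

Definition msub {N} (X Y : Mat N) : Mat N := fun i j => X i j - Y i j.
Definition madd {N} (X Y : Mat N) : Mat N := fun i j => X i j + Y i j.
Definition mscale {N} (s : R) (X : Mat N) : Mat N := fun i j => s * X i j.
Definition mnorm {N} (X : Mat N) : R := sqrt (sumI (fun i => sumI (fun j => X i j * X i j))).
Definition matvec {N} (X : Mat N) (v : Vec N) : Vec N := fun i => sumI (fun j => X i j * v j).

Definition Sym {N} (X : Mat N) : Prop := forall i j, X i j = X j i.
Definition psd {N} (Y : Mat N) : Prop := forall v : Vec N, 0 <= dot v (matvec Y v).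

(* e : 'I_N -> R is a list of the eigenvalues of X (with multiplicity):
   there is an orthonormal basis of eigenvectors v_k with X v_k = e_k v_k. *)
Definition eigvals_of {N} (X : Mat N) (e : 'I_N -> R) : Prop :=
  exists v : 'I_N -> Vec N,
    (forall k l, dot (v k) (v l) = if k == l then 1 else 0) /\
    (forall k i, matvec X (v k) i = e k * v k i).

(* e_i(X): the eigenvalues of X (a choice; for X in Sym(N) they exist by the
   spectral theorem and the Pucci values below do not depend on the choice). *)
Definition eig {N} (X : Mat N) : 'I_N -> R :=
  epsilon (inhabits (fun _ => 0)) (eigvals_of X).

Definition Pucci_plus {N} (lam Lam : R) (X : Mat N) : R :=
  Lam * sumI (fun i => Rmax (eig X i) 0) + lam * sumI (fun i => Rmin (eig X i) 0).
Definition Pucci_minus {N} (lam Lam : R) (X : Mat N) : R :=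
  lam * sumI (fun i => Rmax (eig X i) 0) + Lam * sumI (fun i => Rmin (eig X i) 0).

Definition open_set {N} (U : Vec N -> Prop) : Prop :=
  forall x, U x -> exists r, 0 < r /\ forall y, dist y x < r -> U y.
Definition connected_set {N} (U : Vec N -> Prop) : Prop :=
  forall A B : Vec N -> Prop, open_set A -> open_set B ->
    (forall x, U x -> A x \/ B x) ->
    (forall x, U x -> A x -> B x -> False) ->
    (exists x, U x /\ A x) -> (exists x, U x /\ B x) -> False.
Definition domain {N} (U : Vec N -> Prop) : Prop :=
  open_set U /\ connected_set U /\ exists x, U x.
Definition bounded {N} (U : Vec N -> Prop) : Prop :=
  exists M, forall x, U x -> vnorm x <= M.
Definition closure {N} (U : Vec N -> Prop) : Vec N -> Prop :=
  fun x => forall eps, 0 < eps -> exists y, U y /\ dist y x < eps.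
Definition boundary {N} (U : Vec N -> Prop) : Vec N -> Prop :=
  fun x => closure U x /\ ~ U x.
Definition ball {N} (x : Vec N) (r : R) : Vec N -> Prop := fun y => dist y x < r.

Definition cont_on {N} (U : Vec N -> Prop) (f : Vec N -> R) : Prop :=
  forall x, U x -> forall eps, 0 < eps -> exists del, 0 < del /\
    forall y, U y -> dist y x < del -> Rabs (f y - f x) < eps.

Definition partial_at {N} (f : Vec N -> R) (i : 'I_N) (x : Vec N) (l : R) : Prop :=
  derivable_pt_lim (fun t => f (vadd x (vscale t (evec i)))) 0 l.

Fixpoint Ck {N} (k : nat) (U : Vec N -> Prop) (f : Vec N -> R) : Prop :=
  match k with
  | O => cont_on U f
  | S k' => cont_on U f /\
      exists df : 'I_N -> Vec N -> R,
        (forall i x, U x -> partial_at f i x (df i x)) /\ (forall i, Ck k' U (df i))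
  end.
Definition Cinf {N} (U : Vec N -> Prop) (f : Vec N -> R) : Prop := forall k, Ck k U f.

Definition C2_with {N} (U : Vec N -> Prop) (phi : Vec N -> R)
    (Dphi : Vec N -> Vec N) (D2phi : Vec N -> Mat N) : Prop :=
  cont_on U phi /\
  (forall i x, U x -> partial_at phi i x (Dphi x i)) /\
  (forall i, cont_on U (fun x => Dphi x i)) /\
  (forall i j x, U x -> partial_at (fun y => Dphi y i) j x (D2phi x i j)) /\
  (forall i j, cont_on U (fun x => D2phi x i j)).

(* bounded smooth domain: C^infinity boundary, given locally by a defining
   function with nonvanishing gradient *)
Definition smooth_boundary {N} (U : Vec N -> Prop) : Prop :=
  forall x0, boundary U x0 ->
    exists r (rho : Vec N -> R) (Drho : 'I_N -> Vec N -> R),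
      0 < r /\ Cinf (ball x0 r) rho /\
      (forall i y, ball x0 r y -> partial_at rho i y (Drho i y)) /\
      (exists i, Drho i x0 <> 0) /\
      (forall y, ball x0 r y -> (U y <-> rho y < 0)).

Definition bounded_smooth_domain {N} (U : Vec N -> Prop) : Prop :=
  domain U /\ bounded U /\ smooth_boundary U.

Definition local_min_on {N} (U : Vec N -> Prop) (f : Vec N -> R) (x0 : Vec N) : Prop :=
  exists r, 0 < r /\ forall y, U y -> dist y x0 < r -> f x0 <= f y.
Definition local_max_on {N} (U : Vec N -> Prop) (f : Vec N -> R) (x0 : Vec N) : Prop :=
  exists r, 0 < r /\ forall y, U y -> dist y x0 < r -> f y <= f x0.

Definition visc_super {N} (U : Vec N -> Prop) (G : Vec N -> R -> Vec N -> Mat N -> R)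
    (u : Vec N -> R) : Prop :=
  cont_on U u /\
  forall phi Dphi D2phi x0, C2_with U phi Dphi D2phi -> U x0 ->
    local_min_on U (fun x => u x - phi x) x0 ->
    G x0 (u x0) (Dphi x0) (D2phi x0) <= 0.
Definition visc_sub {N} (U : Vec N -> Prop) (G : Vec N -> R -> Vec N -> Mat N -> R)
    (u : Vec N -> R) : Prop :=
  cont_on U u /\
  forall phi Dphi D2phi x0, C2_with U phi Dphi D2phi -> U x0 ->
    local_max_on U (fun x => u x - phi x) x0 ->
    0 <= G x0 (u x0) (Dphi x0) (D2phi x0).
Definition visc_sol {N} U G (u : Vec N -> R) : Prop := visc_super U G u /\ visc_sub U G u.

(* powers: t^g for t >= 0, g >= 0, with 0^0 = 1 and 0^g = 0 for g > 0 *)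
Definition rpow (t g : R) : R :=
  if Rlt_dec 0 t then Rpower t g else if Req_EM_T g 0 then 1 else 0.

Definition G_aq {N} (F : Vec N -> Mat N -> R) (a : Vec N -> R) (gamma q : R)
    (x : Vec N) (r : R) (p : Vec N) (X : Mat N) : R :=
  rpow (vnorm p) gamma * F x X + a x * rpow r q.

Definition solves_P {N} (Om : Vec N -> Prop) (F : Vec N -> Mat N -> R)
    (a : Vec N -> R) (gamma q : R) (u : Vec N -> R) : Prop :=
  cont_on (closure Om) u /\
  (forall x, Om x -> 0 <= u x) /\
  (forall x, boundary Om x -> u x = 0) /\
  visc_sol Om (G_aq F a gamma q) u.

Definition F1 {N} (Om : Vec N -> Prop) (F : Vec N -> Mat N -> R) (lam Lam : R) : Prop :=
  0 < lam /\ lam <= Lam /\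
  forall x X Y, Om x -> Sym X -> Sym Y -> psd Y ->
    Pucci_minus lam Lam Y <= F x (madd X Y) - F x X <= Pucci_plus lam Lam Y.
Definition F2 {N} (Om : Vec N -> Prop) (F : Vec N -> Mat N -> R) : Prop :=
  forall x X s, Om x -> Sym X -> 0 < s -> F x (mscale s X) = s * F x X.
(* continuity of F on Omega x Sym(N) (standing assumption of the viscosity framework) *)
Definition F_cont {N} (Om : Vec N -> Prop) (F : Vec N -> Mat N -> R) : Prop :=
  forall x X, Om x -> Sym X -> forall eps, 0 < eps -> exists del, 0 < del /\
    forall y Y, Om y -> Sym Y -> dist y x < del -> mnorm (msub Y X) < del ->
      Rabs (F y Y - F x X) < eps.

From Pilot Require Import Defs.
From mathcomp Require Import ssreflect ssrfun ssrbool eqtype ssrnat seq fintype bigop.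
From Stdlib Require Import Reals ClassicalEpsilon.
From HB Require Import structures.
From Stdlib Require Import Lra FunctionalExtensionality Classical.
Open Scope R_scope.
Set Implicit Arguments.
Unset Strict Implicit.

(* If u > 0 at a point where a > 0, continuity gives a small coordinate box, open and convex
   hence connected, on which u > 0 and a > 0. Otherwise a <= 0 wherever u > 0, and then u = 0:
   pick z outside the closure of Omega and maximise u + e |x - z|^2 over that compact set. For e
   small the maximum x1 is interior, because u = 0 on the boundary. The paraboloid
   -e |x - z|^2 touches u from above at x1 with nonzero gradient and Hessian -2e I, so the
   subsolution inequality reads 0 <= |Dphi|^gamma F(x1, -2e I) + a(x1) u(x1)^q, where the first
   term is negative by (F1)-(F2) and the second is nonpositive.
   Only the boundedness and openness of Omega, q > 0 and (F1)-(F2) are used. *)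

HB.instance Definition _ := Monoid.isComLaw.Build R 0 Rplus
  (fun a b c => esym (Rplus_assoc a b c)) Rplus_comm Rplus_0_l.

Section FiniteSums.
Variable N : nat.
Implicit Types f g : 'I_N -> R.

Lemma sumI_add f g : sumI (fun i => f i + g i) = sumI f + sumI g.
Proof. by rewrite /sumI big_split. Qed.

Lemma sumI_le f g : (forall i, f i <= g i) -> sumI f <= sumI g.
Proof.
move=> Hfg; rewrite /sumI; apply: (big_rec2 (fun x y => x <= y)); first lra.
by move=> i y1 y2 _ Hy; move: (Hfg i); lra.
Qed.

Lemma sumI_ge0 f : (forall i, 0 <= f i) -> 0 <= sumI f.
Proof.
move=> Hf; rewrite /sumI.
by apply: (big_ind (fun x => 0 <= x)) => [|x y|j _]; [lra | lra | exact: Hf].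
Qed.

Lemma sumI_const c : sumI (fun _ : 'I_N => c) = INR N * c.
Proof.
rewrite /sumI big_const_ord; elim: N => [|n IH] /=; first lra.
by rewrite IH; case: n {IH} => [|n] /=; lra.
Qed.

Lemma sumI_single f i : (forall j, j != i -> f j = 0) -> sumI f = f i.
Proof. by move=> Hf; rewrite /sumI (bigD1 i) //= big1 ?Rplus_0_r. Qed.

Lemma sumI_ge_term f i : (forall j, 0 <= f j) -> f i <= sumI f.
Proof.
move=> Hf; rewrite /sumI (bigD1 i) //=.
rewrite -{1}(Rplus_0_r (f i)); apply: Rplus_le_compat_l.
apply: (big_ind (fun x => 0 <= x)) => [|x y|j _]; [lra | lra | exact: Hf].
Qed.

Lemma sumI_zero f : (forall i, f i = 0) -> sumI f = 0.
Proof. by move=> Hf; rewrite /sumI big1. Qed.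

End FiniteSums.

Section Coordinates.
Variable N : nat.
Implicit Types x y v w : Vec N.

Lemma coord_le_norm v i : Rabs (v i) <= vnorm v.
Proof.
rewrite /vnorm -sqrt_Rsqr_abs; apply: sqrt_le_1_alt.
rewrite /Rsqr /dot.
by apply: (@sumI_ge_term _ (fun j => v j * v j) i) => j; apply: Rle_0_sqr.
Qed.

Lemma coord_le_dist x y i : Rabs (x i - y i) <= Defs.dist x y.
Proof. exact: (coord_le_norm (vsub x y)). Qed.

Lemma norm_le_coord v d : 0 <= d -> (forall i, Rabs (v i) <= d) ->
  vnorm v <= sqrt (INR N) * d.
Proof.
move=> Hd Hv; rewrite /vnorm -(sqrt_square d) // -sqrt_mult; [|exact: pos_INR|nra].
apply: sqrt_le_1_alt; rewrite /dot -sumI_const; apply: sumI_le => i.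
rewrite -[v i * v i]/(Rsqr (v i)) Rsqr_abs /Rsqr.
by move: (Hv i) (Rabs_pos (v i)); nra.
Qed.

Lemma dist_lt_coord x y r : 0 < r ->
  (forall i, Rabs (x i - y i) < r / (sqrt (INR N) + 1)) -> Defs.dist x y < r.
Proof.
move=> Hr Hxy; have Hs := sqrt_pos (INR N).
have Hd : 0 < r / (sqrt (INR N) + 1) by apply: Rdiv_lt_0_compat; lra.
have := norm_le_coord (v := vsub x y) (Rlt_le _ _ Hd) (fun i => Rlt_le _ _ (Hxy i)).
have -> : sqrt (INR N) * (r / (sqrt (INR N) + 1)) = r - r / (sqrt (INR N) + 1).
  by field; lra.
rewrite /Defs.dist; lra.
Qed.

Lemma vnorm_gt0 v i : v i <> 0 -> 0 < vnorm v.
Proof.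
move=> Hvi; apply: sqrt_lt_R0; rewrite /dot.
apply: Rlt_le_trans (@sumI_ge_term _ (fun j => v j * v j) i _); last first.
  by move=> j; apply: Rle_0_sqr.
exact: Rsqr_pos_lt.
Qed.

Lemma dist_xx x : Defs.dist x x = 0.
Proof. by rewrite /Defs.dist /vnorm /dot sumI_zero ?sqrt_0 // => i; rewrite /vsub; ring. Qed.

Lemma subset_closure (U : Vec N -> Prop) x : U x -> closure U x.
Proof. by move=> Ux eps Heps; exists x; rewrite dist_xx. Qed.

End Coordinates.

Section Continuity.
Variables (N : nat) (U : Vec N -> Prop).
Implicit Types f g : Vec N -> R.

Lemma cont_on_const c : cont_on U (fun _ => c).
Proof. by move=> x _ eps Heps; exists 1; split=> [|y _ _]; rewrite ?Rminus_diag ?Rabs_R0; lra. Qed.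

Lemma cont_on_coord i : cont_on U (fun x => x i).
Proof.
move=> x _ eps Heps; exists eps; split=> // y _ Hy.
exact: Rle_lt_trans (coord_le_dist y x i) Hy.
Qed.

Lemma cont_on_comp (h : R -> R) f : continuity h -> cont_on U f -> cont_on U (fun x => h (f x)).
Proof.
move=> Hh Hf x Ux eps Heps.
have [alp [Halp Hhalp]] := Hh (f x) eps Heps.
have [del [Hdel Hfdel]] := Hf x Ux alp Halp.
exists del; split=> // y Uy Hy.
case: (Req_dec (f y) (f x)) => [->|Hne]; first by rewrite Rminus_diag Rabs_R0.
exact: (Hhalp (f y) (conj (conj I (not_eq_sym Hne)) (Hfdel y Uy Hy))).
Qed.

Lemma cont_on_add f g : cont_on U f -> cont_on U g -> cont_on U (fun x => f x + g x).
Proof.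
move=> Hf Hg x Ux eps Heps.
have [d1 [Hd1 H1]] := Hf x Ux (eps / 2) ltac:(lra).
have [d2 [Hd2 H2]] := Hg x Ux (eps / 2) ltac:(lra).
exists (Rmin d1 d2); split; first exact: Rmin_glb_lt.
move=> y Uy Hy; have Hy1 := H1 y Uy (Rlt_le_trans _ _ _ Hy (Rmin_l _ _)).
have Hy2 := H2 y Uy (Rlt_le_trans _ _ _ Hy (Rmin_r _ _)).
have := Rabs_triang (f y - f x) (g y - g x).
by rewrite (_ : f y - f x + (g y - g x) = f y + g y - (f x + g x)); [lra | ring].
Qed.

Lemma cont_on_sumI (f : 'I_N -> Vec N -> R) :
  (forall i, cont_on U (f i)) -> cont_on U (fun x => sumI (fun i => f i x)).
Proof.
move=> Hf; rewrite /sumI; elim: (index_enum _) => [|i r IH].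
  under [fun x => _]functional_extensionality => x do rewrite big_nil.
  exact: cont_on_const.
under [fun x => _]functional_extensionality => x do rewrite big_cons.
exact: cont_on_add.
Qed.

End Continuity.

Lemma incr_geq (phi : nat -> nat) :
  (forall n, (phi n < phi n.+1)%nat) -> forall n, (n <= phi n)%nat.
Proof. by move=> Hphi; elim=> [|n IH] //; apply: leq_ltn_trans IH (Hphi n). Qed.

Lemma Un_cv_subseq (v : nat -> R) l (psi : nat -> nat) :
  (forall n, (psi n < psi n.+1)%nat) -> Un_cv v l -> Un_cv (fun n => v (psi n)) l.
Proof.
move=> Hpsi Hv eps Heps; have [n0 Hn0] := Hv eps Heps; exists n0 => n /leP Hn.
by apply: Hn0; apply/leP; apply: leq_trans Hn (incr_geq Hpsi n).
Qed.

Lemma inv_INR_lt eps : 0 < eps -> exists n0, forall n, (n0 <= n)%nat -> / INR n.+1 < eps.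
Proof.
move=> Heps; have [n0 [Hn0 Hn0pos]] := archimed_cor1 eps Heps; exists n0 => n Hn.
apply: Rle_lt_trans Hn0; apply: Rinv_le_contravar; first exact: lt_0_INR.
by apply: le_INR; apply/leP; apply: leq_trans Hn _.
Qed.

Lemma cluster_subseq (v : nat -> R) l : ValAdh v l ->
  exists psi, (forall n, (psi n < psi n.+1)%nat) /\ Un_cv (fun n => v (psi n)) l.
Proof.
move=> Hl.
have Hnext k m : exists p, (m < p)%nat /\ Rabs (v p - l) < / INR k.+1.
  have Hk : 0 < / INR k.+1 by apply: Rinv_0_lt_compat; apply: lt_0_INR; apply/ltP.
  have Hnbh : neighbourhood (fun y => Rabs (y - l) < / INR k.+1) l.
    by exists (mkposreal _ Hk) => y Hy.
  by have [p [/leP Hmp Hp]] := Hl _ m.+1 Hnbh; exists p.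
pose next k m := proj1_sig (constructive_indefinite_description _ (Hnext k m)).
have Hnx k m : (m < next k m)%nat /\ Rabs (v (next k m) - l) < / INR k.+1.
  exact: proj2_sig (constructive_indefinite_description _ (Hnext k m)).
pose psi := fix psi k := if k is k'.+1 then next k (psi k') else next 0%nat 0%nat.
have Hpsi k : Rabs (v (psi k) - l) < / INR k.+1 by case: k => [|k]; apply: (Hnx _ _).2.
exists psi; split=> [n|eps Heps]; first exact: (Hnx n.+1 (psi n)).1.
have [n0 Hn0] := inv_INR_lt Heps; exists n0 => n /leP Hn.
by have := Hn0 n Hn; have := Hpsi n; rewrite /Rdist; lra.
Qed.

Lemma bounded_cv_subseq (v : nat -> R) B : (forall n, Rabs (v n) <= B) ->
  exists psi l, (forall n, (psi n < psi n.+1)%nat) /\ Un_cv (fun n => v (psi n)) l.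
Proof.
move=> HB.
have [l Hl] : exists l, ValAdh v l.
  apply: (Bolzano_Weierstrass v _ (compact_P3 (- B) B)) => n.
  by move: (HB n); rewrite /Rabs; case: Rcase_abs; lra.
by have [psi Hpsi] := cluster_subseq Hl; exists psi, l.
Qed.

Section Compactness.
Variable N : nat.

Definition coord_closed (K : Vec N -> Prop) : Prop :=
  forall L, (forall d, 0 < d -> exists y, K y /\ forall i, Rabs (y i - L i) < d) -> K L.

Lemma bounded_coord_cv_subseq (x : nat -> Vec N) B : (forall n i, Rabs (x n i) <= B) ->
  exists phi (L : Vec N), (forall n, (phi n < phi n.+1)%nat) /\
    forall i, Un_cv (fun n => x (phi n) i) (L i).
Proof.
move=> HB.
suff /(_ N (leqnn N)) [phi [L [Hphi HL]]] : forall k, (k <= N)%nat ->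
    exists phi (L : Vec N), (forall n, (phi n < phi n.+1)%nat) /\
      forall i : 'I_N, (i < k)%nat -> Un_cv (fun n => x (phi n) i) (L i).
  by exists phi, L; split=> // i; apply: HL.
elim=> [|k IH] HkN.
  by exists (fun n => n), (fun _ => 0); split.
have [phi [L [Hphi HL]]] := IH (ltnW HkN).
pose ik := Ordinal HkN.
have [psi [l [Hpsi Hl]]] := bounded_cv_subseq (fun n => HB (phi n) ik).
exists (fun n => phi (psi n)), (fun j => if j == ik then l else L j); split.
  by move=> n; apply: (homo_ltn ltn_trans Hphi).
move=> i; rewrite ltnS leq_eqVlt => /orP[Hik|Hik]; case: eqP => [->|Hne] //.
- by exfalso; apply: Hne; apply: val_inj; apply/eqP.
- exact: (Un_cv_subseq (v := fun n => x (phi n) i) Hpsi (HL i Hik)).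
Qed.

Lemma coord_cv_eventually (y : nat -> Vec N) (L : Vec N) :
  (forall i, Un_cv (fun n => y n i) (L i)) ->
  forall d, 0 < d -> exists n0, forall n, (n0 <= n)%nat -> forall i, Rabs (y n i - L i) < d.
Proof.
move=> HL d Hd.
have Hi i : exists n0, forall n, (n0 <= n)%nat -> Rabs (y n i - L i) < d.
  by have [n0 Hn0] := HL i d Hd; exists n0 => n /leP; apply: Hn0.
pose n0 i := proj1_sig (constructive_indefinite_description _ (Hi i)).
have Hn0 i : forall n, (n0 i <= n)%nat -> Rabs (y n i - L i) < d.
  exact: proj2_sig (constructive_indefinite_description _ (Hi i)).
exists (\max_(i < N) n0 i) => n Hn i; apply: Hn0.
exact: leq_trans (leq_bigmax (F := n0) i) Hn.
Qed.

Section Extremum.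
Variables (K : Vec N -> Prop) (B : R) (f : Vec N -> R).
Hypotheses (HKB : forall x, K x -> forall i, Rabs (x i) <= B)
  (HKcl : coord_closed K) (Hf : cont_on K f).

Lemma closed_cv_subseq (xs : nat -> Vec N) : (forall n, K (xs n)) ->
  exists phi L, (forall n, (phi n < phi n.+1)%nat) /\ K L /\
    Un_cv (fun n => f (xs (phi n))) (f L).
Proof.
move=> Kxs.
have [phi [L [Hphi HL]]] := bounded_coord_cv_subseq (fun n => HKB (Kxs n)).
have Hev := coord_cv_eventually HL.
have KL : K L.
  apply: HKcl => d Hd; have [n0 Hn0] := Hev d Hd.
  by exists (xs (phi n0)); split=> //; apply: Hn0.
exists phi, L; do 2!split=> //; move=> eps Heps.
have [del [Hdel Hfdel]] := Hf KL Heps.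
have Hd : 0 < del / (sqrt (INR N) + 1).
  by apply: Rdiv_lt_0_compat; have := sqrt_pos (INR N); lra.
have [n0 Hn0] := Hev _ Hd; exists n0 => n /leP Hn.
by apply: Hfdel => //; apply: dist_lt_coord => //; apply: Hn0.
Qed.

Lemma cont_bounded_above : exists M, forall x, K x -> f x <= M.
Proof.
apply: NNPP => Hunb.
have Hxs (n : nat) : exists x, K x /\ INR n < f x.
  apply: NNPP => Hn; apply: Hunb; exists (INR n) => x Kx.
  by apply: Rnot_lt_le => Hlt; apply: Hn; exists x.
pose xs n := proj1_sig (constructive_indefinite_description _ (Hxs n)).
have Hxsn n : K (xs n) /\ INR n < f (xs n).
  exact: proj2_sig (constructive_indefinite_description _ (Hxs n)).
have [phi [L [Hphi [KL Hcv]]]] := closed_cv_subseq (fun n => (Hxsn n).1).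
have [n0 Hn0] := Hcv 1 Rlt_0_1.
have [m Hm] := INR_unbounded (f L + 1).
have Hn := Hn0 (maxn n0 m) (leP (leq_maxl _ _)).
have : INR m <= INR (phi (maxn n0 m)).
  by apply: le_INR; apply/leP; apply: leq_trans (leq_maxr n0 m) (incr_geq Hphi _).
have := (Hxsn (phi (maxn n0 m))).2; move: Hn; rewrite /Rdist.
by move: (Rle_abs (f (xs (phi (maxn n0 m))) - f L)); lra.
Qed.

Lemma attain_max x0 : K x0 -> exists x1, K x1 /\ forall x, K x -> f x <= f x1.
Proof.
move=> Kx0; pose E r := exists x, K x /\ r = f x.
have HE : bound E by have [M HM] := cont_bounded_above; exists M => r [x [Kx ->]]; apply: HM.
have [m [Hub Hlub]] := completeness E HE (ex_intro _ (f x0) (ex_intro _ x0 (conj Kx0 erefl))).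
have Hxs (n : nat) : exists x, K x /\ m - / INR n.+1 < f x.
  apply: NNPP => Hn.
  have : 0 < / INR n.+1 by apply: Rinv_0_lt_compat; apply: lt_0_INR; apply/ltP.
  suff : m <= m - / INR n.+1 by lra.
  by apply: Hlub => r [x [Kx ->]]; apply: Rnot_lt_le => Hlt; apply: Hn; exists x.
pose xs n := proj1_sig (constructive_indefinite_description _ (Hxs n)).
have Hxsn n : K (xs n) /\ m - / INR n.+1 < f (xs n).
  exact: proj2_sig (constructive_indefinite_description _ (Hxs n)).
have [phi [L [Hphi [KL Hcv]]]] := closed_cv_subseq (fun n => (Hxsn n).1).
exists L; split=> // x Kx.
suff : m <= f L by have := Hub (f x) (ex_intro _ x (conj Kx erefl)); lra.
apply: Rnot_lt_le => Hlt.
have Hgap : 0 < (m - f L) / 2 by lra.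
have [n0 Hn0] := Hcv _ Hgap; have [n1 Hn1] := inv_INR_lt Hgap.
pose n := maxn n0 n1.
have := Hn0 n (leP (leq_maxl _ _)); rewrite /Rdist.
have := Hn1 (phi n) (leq_trans (leq_maxr n0 n1) (incr_geq Hphi _)).
have := (Hxsn (phi n)).2; have := Rle_abs (f (xs (phi n)) - f L).
lra.
Qed.

End Extremum.
End Compactness.

Section Closure.
Variables (N : nat) (U : Vec N -> Prop).

Lemma closure_coord_bounded : Defs.bounded U ->
  exists B, forall x, closure U x -> forall i, Rabs (x i) <= B.
Proof.
move=> [M HM]; exists (Rabs M + 1) => x Hx i.
have [w [Uw Hw]] := Hx 1 Rlt_0_1.
have := coord_le_norm w i; have := HM w Uw; have := coord_le_dist w x i.
have := Rabs_triang_inv (x i) (w i); rewrite Rabs_minus_sym.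
by have := Rle_abs M; lra.
Qed.

Lemma closure_coord_closed : coord_closed (closure U).
Proof.
move=> L HL eps Heps.
have Hd : 0 < eps / (sqrt (INR N) + 1) / 2.
  by apply: Rdiv_lt_0_compat; [apply: Rdiv_lt_0_compat; have := sqrt_pos (INR N)|]; lra.
have [y [Hy HyL]] := HL _ Hd; have [w [Uw Hwy]] := Hy _ Hd.
exists w; split=> //; apply: dist_lt_coord => // i.
have := Rabs_triang (w i - y i) (y i - L i).
rewrite (_ : w i - y i + (y i - L i) = w i - L i); last ring.
by have := HyL i; have := coord_le_dist w y i; lra.
Qed.

End Closure.

Lemma unit_interval_connected (A B : R -> Prop) :
  (forall s, A s -> exists eta, 0 < eta /\ forall t, Rabs (t - s) < eta -> A t) ->
  (forall s, B s -> exists eta, 0 < eta /\ forall t, Rabs (t - s) < eta -> B t) ->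
  (forall s, 0 <= s <= 1 -> A s \/ B s) ->
  (forall s, 0 <= s <= 1 -> A s -> B s -> False) ->
  A 0 -> B 1 -> False.
Proof.
move=> HA HB Hcov Hdis A0 B1.
pose S t := 0 <= t <= 1 /\ forall s, 0 <= s <= t -> A s.
have HS0 : S 0 by split=> [|s Hs]; [lra | rewrite (_ : s = 0) //; lra].
have HSub : bound S by exists 1 => t [Ht _]; lra.
have [s0 [Hub Hlub]] := completeness S HSub (ex_intro _ 0 HS0).
have Hs0 : 0 <= s0 <= 1 by split; [apply: Hub | apply: Hlub => t [Ht _]; lra].
have Hbelow s : 0 <= s < s0 -> A s.
  move=> Hs; apply: NNPP => Hn; suff : s0 <= s by lra.
  apply: Hlub => t [Ht HtA]; apply: Rnot_lt_le => Hts; apply: Hn; apply: HtA; lra.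
case: (Hcov s0 Hs0) => [As0|Bs0].
- have [eta [Heta HetaA]] := HA s0 As0.
  case: (Req_dec s0 1) => [Hs01|Hs01]; first by apply: (Hdis 1); [lra | rewrite -Hs01 |].
  pose t := Rmin 1 (s0 + eta / 2).
  have Ht : s0 < t <= 1 /\ t <= s0 + eta / 2 by rewrite /t /Rmin; case: Rle_dec; lra.
  suff : t <= s0 by lra.
  apply: Hub; split=> [|s Hs]; first lra.
  case: (Rlt_le_dec s s0) => Hss; first by apply: Hbelow; lra.
  by apply: HetaA; rewrite Rabs_pos_eq; lra.
- have [eta [Heta HetaB]] := HB s0 Bs0.
  case: (Req_dec s0 0) => [Hs00|Hs00]; first by apply: (Hdis 0); [lra | | rewrite -Hs00].
  pose s := Rmax (s0 / 2) (s0 - eta / 2).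
  have Hs : 0 <= s < s0 /\ s0 - eta / 2 <= s by rewrite /s /Rmax; case: Rle_dec; lra.
  apply: (Hdis s); [lra | apply: Hbelow; lra | apply: HetaB].
  by rewrite Rabs_left; lra.
Qed.

Section Boxes.
Variable N : nat.

Definition convex (U : Vec N -> Prop) : Prop :=
  forall a b t, U a -> U b -> 0 <= t <= 1 -> U (fun i => a i + t * (b i - a i)).

Lemma convex_connected U : convex U -> connected_set U.
Proof.
move=> HU A B HA HB Hcov Hdis [a [Ua Aa]] [b [Ub Bb]].
pose p t : Vec N := fun i => a i + t * (b i - a i).
have Hp s t : Defs.dist (p t) (p s) <= sqrt (INR N) * (Rabs (t - s) * Defs.dist b a).
  apply: norm_le_coord => [|i]; first by apply: Rmult_le_pos; [apply: Rabs_pos | apply: sqrt_pos].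
  rewrite /vsub /p (_ : _ - _ = (t - s) * (b i - a i)); last ring.
  by rewrite Rabs_mult; apply: Rmult_le_compat_l; [apply: Rabs_pos | apply: coord_le_dist].
have Hpull (C : Vec N -> Prop) : Defs.open_set C -> forall s, C (p s) ->
    exists eta, 0 < eta /\ forall t, Rabs (t - s) < eta -> C (p t).
  move=> HC s Cs; have [r [Hr HrC]] := HC _ Cs.
  have Hk : 0 <= sqrt (INR N) * Defs.dist b a by apply: Rmult_le_pos; apply: sqrt_pos.
  exists (r / (sqrt (INR N) * Defs.dist b a + 1)); split=> [|t Ht].
    by apply: Rdiv_lt_0_compat; lra.
  apply: HrC; apply: Rle_lt_trans (Hp s t) _.
  have := Rmult_le_compat_l _ _ _ Hk (Rlt_le _ _ Ht).
  rewrite (_ : _ * (r / _) = r - r / (sqrt (INR N) * Defs.dist b a + 1)); last by field; lra.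
  have : 0 < r / (sqrt (INR N) * Defs.dist b a + 1) by apply: Rdiv_lt_0_compat; lra.
  by have := Rabs_pos (t - s); nra.
have Hp0 : p 0 = a by apply: functional_extensionality => i; rewrite /p; ring.
have Hp1 : p 1 = b by apply: functional_extensionality => i; rewrite /p; ring.
apply: (unit_interval_connected (A := fun t => A (p t)) (B := fun t => B (p t))).
- exact: Hpull.
- exact: Hpull.
- by move=> s Hs; apply: Hcov; apply: HU.
- by move=> s Hs; apply: Hdis; apply: HU.
- by rewrite Hp0.
- by rewrite Hp1.
Qed.

Definition box (y : Vec N) (rho : R) : Vec N -> Prop :=
  fun w => forall i, Rabs (w i - y i) < rho.

Lemma box_convex y rho : convex (box y rho).
Proof.
move=> a b t Ha Hb Ht i.
rewrite (_ : _ - _ = (1 - t) * (a i - y i) + t * (b i - y i)); last ring.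
apply: Rle_lt_trans (Rabs_triang _ _) _.
rewrite !Rabs_mult (Rabs_pos_eq t) ?(Rabs_pos_eq (1 - t)); try lra.
by have := Ha i; have := Hb i; case: (Rlt_le_dec t 1); nra.
Qed.

Lemma finite_max_lt (h : 'I_N -> R) c : (forall i, h i < c) ->
  exists m, m < c /\ forall i, h i <= m.
Proof.
move=> Hh; suff [m [Hm Hhm]] : exists m, m < c /\ forall i, i \in enum 'I_N -> h i <= m.
  by exists m; split=> // i; apply: Hhm; rewrite mem_enum.
elim: (enum 'I_N) => [|j s [m [Hm Hhm]]]; first by exists (c - 1); split; [lra|].
exists (Rmax (h j) m); split; first exact: Rmax_lub_lt.
move=> i; rewrite in_cons => /orP[/eqP ->|Hi]; first exact: Rmax_l.
exact: Rle_trans (Hhm i Hi) (Rmax_r _ _).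
Qed.

Lemma box_open y rho : Defs.open_set (box y rho).
Proof.
move=> w Hw.
have [m [Hm Hwm]] := finite_max_lt Hw.
exists (rho - m); split=> [|v Hv i]; first lra.
have := Rabs_triang (v i - w i) (w i - y i).
rewrite (_ : v i - w i + (w i - y i) = v i - y i); last ring.
by have := coord_le_dist v w i; have := Hwm i; lra.
Qed.

Lemma box_domain y rho : 0 < rho -> domain (box y rho).
Proof.
move=> Hrho; split; first exact: box_open.
split; first exact/convex_connected/box_convex.
by exists y => i; rewrite Rminus_diag Rabs_R0.
Qed.

End Boxes.

Lemma cont_on_pos_ball N (V : Vec N -> Prop) f y : cont_on V f -> V y -> 0 < f y ->
  exists r, 0 < r /\ forall w, V w -> Defs.dist w y < r -> 0 < f w.
Proof.
move=> Hf Vy Hfy; have [r [Hr Hfr]] := Hf y Vy (f y) Hfy.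
exists r; split=> // w Vw Hw.
by have := Hfr w Vw Hw; have := Rle_abs (- (f w - f y)); rewrite Rabs_Ropp; lra.
Qed.

Lemma positive_box N (U V : Vec N -> Prop) (f g : Vec N -> R) y :
  Defs.open_set U -> (forall x, U x -> V x) -> cont_on V f -> cont_on V g ->
  U y -> 0 < f y -> 0 < g y ->
  exists rho, 0 < rho /\ forall w, box y rho w -> U w /\ 0 < f w /\ 0 < g w.
Proof.
move=> HU HUV Hf Hg Uy Hfy Hgy.
have [r1 [Hr1 HUr]] := HU y Uy.
have [r2 [Hr2 Hfr]] := cont_on_pos_ball Hf (HUV y Uy) Hfy.
have [r3 [Hr3 Hgr]] := cont_on_pos_ball Hg (HUV y Uy) Hgy.
pose r := Rmin r1 (Rmin r2 r3).
have Hr : 0 < r /\ r <= r1 /\ r <= r2 /\ r <= r3.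
  by rewrite /r /Rmin; do 2!case: Rle_dec; lra.
exists (r / (sqrt (INR N) + 1)); split.
  by apply: Rdiv_lt_0_compat; have := sqrt_pos (INR N); lra.
move=> w Hw; have Hwy := dist_lt_coord Hr.1 Hw.
have Uw : U w by apply: HUr; lra.
by do 2?split; [exact: Uw | apply: Hfr | apply: Hgr]; try exact: HUV; lra.
Qed.

Section ScalarMatrices.
Variable N : nat.

Definition scalar_mat (c : R) : Mat N := fun i j => if i == j then c else 0.

Lemma scalar_mat_sym c : Sym (scalar_mat c).
Proof. by move=> i j; rewrite /scalar_mat eq_sym. Qed.

Lemma matvec_scalar_mat c (v : Vec N) i : matvec (scalar_mat c) v i = c * v i.
Proof.
rewrite /matvec (@sumI_single _ _ i) /scalar_mat ?eqxx // => j Hj.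
by rewrite eq_sym (negbTE Hj); ring.
Qed.

Lemma scalar_mat_psd c : 0 <= c -> psd (scalar_mat c).
Proof.
move=> Hc v; apply: sumI_ge0 => i; rewrite matvec_scalar_mat.
by have := Rle_0_sqr (v i); rewrite /Rsqr; nra.
Qed.

(* [eig] is a choice, but every orthonormal eigenbasis of [c I] has all eigenvalues [c]. *)
Lemma eig_scalar_mat c k : eig (scalar_mat c) k = c.
Proof.
have Hex : eigvals_of (scalar_mat c) (fun _ => c).
  exists evec; split=> [k' l|k' i]; last by rewrite matvec_scalar_mat.
  rewrite /dot (@sumI_single _ _ k') /evec ?eqxx; first by case: (k' == l); ring.
  by move=> j Hj; rewrite (negbTE Hj); ring.
have [v [Hon Hev]] := epsilon_spec (inhabits (fun _ : 'I_N => 0))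
  (eigvals_of (scalar_mat c)) (ex_intro _ _ Hex).
rewrite -/(eig (scalar_mat c)) in Hev; apply: NNPP => Hne.
have Hvk i : v k i = 0.
  have := Hev k i; rewrite matvec_scalar_mat => Hi.
  have : (c - eig (scalar_mat c) k) * v k i = 0 by lra.
  by case/Rmult_integral => // Hc; exfalso; apply: Hne; lra.
have := Hon k k; rewrite eqxx /dot sumI_zero; first lra.
by move=> i; rewrite Hvk Rmult_0_l.
Qed.

Lemma Pucci_minus_scalar_mat lam Lam c : 0 <= c ->
  Pucci_minus lam Lam (scalar_mat c) = lam * (INR N * c).
Proof.
move=> Hc; rewrite /Pucci_minus.
under [fun i => Rmax _ _]functional_extensionality => i do rewrite eig_scalar_mat Rmax_left //.
under [fun i => Rmin _ _]functional_extensionality => i do rewrite eig_scalar_mat Rmin_right //.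
by rewrite !sumI_const; ring.
Qed.

End ScalarMatrices.

Section Ellipticity.
Variables (N : nat) (Om : Vec N -> Prop) (F : Vec N -> Mat N -> R) (lam Lam : R).
Hypotheses (HF1 : F1 Om F lam Lam) (HF2 : F2 Om F).

Lemma F_at_zero x : Om x -> F x (fun _ _ => 0) = 0.
Proof.
move=> Ox; have := @HF2 x (fun _ _ => 0) 2 Ox (fun _ _ => erefl) ltac:(lra).
rewrite (_ : mscale 2 _ = fun _ _ => 0); first lra.
by do 2!apply: functional_extensionality => ?; rewrite /mscale Rmult_0_r.
Qed.

Lemma F_scalar_mat_lt0 x c : (1 <= N)%nat -> Om x -> c < 0 -> F x (scalar_mat c) < 0.
Proof.
move=> HN Ox Hc; have [Hlam [_ Hell]] := HF1.
have [Hlow _] := Hell x _ _ Ox (scalar_mat_sym c) (scalar_mat_sym (- c))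
  (scalar_mat_psd (ltac:(lra) : 0 <= - c)).
rewrite (_ : madd _ _ = fun _ _ => 0) ?F_at_zero // in Hlow; last first.
  do 2!apply: functional_extensionality => ?.
  by rewrite /madd /scalar_mat; case: (_ == _); ring.
rewrite Pucci_minus_scalar_mat in Hlow; last lra.
have HNpos : 0 < INR N by apply: lt_0_INR; apply/ltP.
have : 0 < lam * (INR N * - c) by apply: Rmult_lt_0_compat => //; nra.
lra.
Qed.

End Ellipticity.

Lemma derivable_pt_lim_quadratic a b c :
  derivable_pt_lim (fun t => a + b * t + c * (t * t)) 0 b.
Proof.
have Hd := derivable_pt_lim_plus _ _ 0 _ _
  (derivable_pt_lim_plus _ _ 0 _ _ (derivable_pt_lim_const a 0)
     (derivable_pt_lim_scal id b 0 _ (derivable_pt_lim_id 0)))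
  (derivable_pt_lim_scal Rsqr c 0 _ (derivable_pt_lim_Rsqr 0)).
by rewrite (_ : 0 + b * 1 + c * (2 * 0) = b) in Hd; last ring.
Qed.

Section Paraboloid.
Variables (N : nat) (z : Vec N).

Definition sqdist (x : Vec N) : R := dot (vsub x z) (vsub x z).

Lemma cont_on_sqdist U : cont_on U sqdist.
Proof.
apply: (cont_on_sumI (f := fun i x => (x i - z i) * (x i - z i))) => i.
by apply: (cont_on_comp (h := fun t => (t - z i) * (t - z i))); [reg | apply: cont_on_coord].
Qed.

Lemma sqdist_shift x i t :
  sqdist (vadd x (vscale t (evec i))) = sqdist x + 2 * (x i - z i) * t + t * t.
Proof.
rewrite /sqdist /dot.
rewrite (_ : (fun j => _) = fun j => vsub x z j * vsub x z j +
  if j == i then 2 * (x j - z j) * t + t * t else 0).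
  rewrite sumI_add (@sumI_single _ (fun j => if j == i then _ else 0) i) ?eqxx; first ring.
  by move=> j /negbTE ->.
apply: functional_extensionality => j; rewrite /vsub /vadd /vscale /evec.
by case: (j == i); ring.
Qed.

Lemma C2_paraboloid U c : C2_with U (fun x => c * sqdist x)
  (fun x i => 2 * c * (x i - z i)) (fun _ => scalar_mat (2 * c)).
Proof.
split; [|split; [|split; [|split]]].
- by apply: (cont_on_comp (h := fun t => c * t)); [reg | apply: cont_on_sqdist].
- move=> i x _.
  apply: derivable_pt_lim_ext (derivable_pt_lim_quadratic (c * sqdist x) _ c) => t.
  by rewrite sqdist_shift; ring.
- move=> i.
  by apply: (cont_on_comp (h := fun t => 2 * c * (t - z i))); [reg | apply: cont_on_coord].
- move=> i j x _.
  apply: derivable_pt_lim_ext (derivable_pt_lim_quadratic (2 * c * (x i - z i)) _ 0) => t.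
  by rewrite /vadd /vscale /evec /scalar_mat; case: (i == j); ring.
- by move=> i j; apply: cont_on_const.
Qed.

End Paraboloid.

Lemma rpow_gt0 t g : 0 < t -> 0 < rpow t g.
Proof. by move=> Ht; rewrite /rpow; case: (Rlt_dec 0 t) => Ht'; [apply: exp_pos | lra]. Qed.

Lemma rpow_ge0 t g : 0 <= rpow t g.
Proof.
rewrite /rpow; case: (Rlt_dec 0 t) => Ht; first exact/Rlt_le/exp_pos.
by case: (Req_EM_T g 0) => Hg /=; lra.
Qed.

Lemma rpow0l g : 0 < g -> rpow 0 g = 0.
Proof.
by move=> Hg; rewrite /rpow; case: (Rlt_dec 0 0) => H0; [lra | case: (Req_EM_T g 0) => /=; lra].
Qed.

Lemma subsolution_vanishes N (Om : Vec N -> Prop) F lam Lam a gamma q u :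
  (1 <= N)%nat -> Defs.bounded Om -> 0 < q -> F1 Om F lam Lam -> F2 Om F ->
  cont_on (closure Om) u -> (forall x, Om x -> 0 <= u x) ->
  (forall x, boundary Om x -> u x = 0) -> visc_sub Om (G_aq F a gamma q) u ->
  (forall y, Om y -> 0 < u y -> a y <= 0) ->
  forall x, Om x -> u x = 0.
Proof.
move=> HN HOb Hq HF1 HF2 Hu Hu0 Hubd [_ Hsub] Hau x0 Ox0.
apply: Rle_antisym (Hu0 x0 Ox0); apply: Rnot_lt_le => ux0.
have [B HKB] := closure_coord_bounded HOb.
have HKcl := @closure_coord_closed N Om.
have Kx0 := subset_closure Ox0.
pose i0 := Ordinal HN.
pose z : Vec N := fun i => if i == i0 then B + 1 else 0.
have [xm [_ Hxm]] := attain_max HKB HKcl (cont_on_sqdist z (U := closure Om)) Kx0.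
have Hsq x : 0 <= sqdist z x by apply: sumI_ge0 => i; apply: Rle_0_sqr.
pose e := u x0 / (2 * (sqdist z xm + 1)).
have [He Hexm] : 0 < e /\ e * (sqdist z xm + 1) = u x0 / 2.
  by split; [apply: Rdiv_lt_0_compat; have := Hsq xm | rewrite /e; field; have := Hsq xm]; lra.
have Hfcont : cont_on (closure Om) (fun x => u x + e * sqdist z x).
  apply: cont_on_add Hu _.
  by apply: (cont_on_comp (h := fun t => e * t)); [reg | apply: cont_on_sqdist].
have [x1 [Kx1 Hx1]] := attain_max HKB HKcl Hfcont Kx0.
have Ox1 : Om x1.
  apply: NNPP => Nx1; have := Hx1 x0 Kx0; rewrite (Hubd x1); last by split.
  have := Rmult_le_compat_l e _ _ (Rlt_le _ _ He) (Hxm x1 Kx1).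
  have := Rmult_le_pos _ _ (Rlt_le _ _ He) (Hsq x0).
  by rewrite Rmult_plus_distr_l Rmult_1_r in Hexm; lra.
have Hmax : local_max_on Om (fun x => u x - (- e) * sqdist z x) x1.
  by exists 1; split=> [|y Oy _]; [lra | have := Hx1 y (subset_closure Oy); lra].
have := Hsub _ _ _ x1 (C2_paraboloid z Om (- e)) Ox1 Hmax; rewrite /G_aq.
have HF : F x1 (scalar_mat (2 * - e)) < 0 by apply: (F_scalar_mat_lt0 HF1 HF2) => //; lra.
have Hgrad : 0 < rpow (vnorm (fun i => 2 * - e * (x1 i - z i))) gamma.
  apply/rpow_gt0/(vnorm_gt0 (i := i0)); rewrite /z eqxx.
  by have := Rle_abs (x1 i0); have := HKB x1 Kx1 i0; nra.
have Hreact : a x1 * rpow (u x1) q <= 0.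
  case: (Rlt_le_dec 0 (u x1)) => Hu1.
    by have := Hau x1 Ox1 Hu1; have := rpow_ge0 (u x1) q; nra.
  have -> : u x1 = 0 by have := Hu0 x1 Ox1; lra.
  by rewrite rpow0l // Rmult_0_r; lra.
nra.
Qed.

Theorem mainTheorem7 (N : nat) (Om : Vec N -> Prop) (gamma q lam Lam : R)
    (a : Vec N -> R) (F : Vec N -> Mat N -> R) (u : Vec N -> R) :
  (1 <= N)%nat ->
  bounded_smooth_domain Om ->
  0 <= gamma -> 0 < q -> q < gamma + 1 ->
  cont_on (closure Om) a ->
  F_cont Om F -> F1 Om F lam Lam -> F2 Om F ->
  solves_P Om F a gamma q u ->
  (exists x, closure Om x /\ u x <> 0) ->
  exists Om' : Vec N -> Prop,
    domain Om' /\
    (forall x, Om' x -> Om x /\ 0 < a x) /\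
    (forall x, Om' x -> 0 < u x).
Proof.
move=> HN [[HOopen _] [HOb _]] _ Hq _ Ha _ HF1 HF2 [Hu [Hu0 [Hubd [_ Hsub]]]] [x0 [Kx0 Hux0]].
have Ox0 : Om x0 by apply: NNPP => Nx0; apply/Hux0/Hubd.
case: (classic (exists y, Om y /\ 0 < u y /\ 0 < a y)) => [[y [Oy [uy ay]]] | Hnone].
- have [rho [Hrho Hbox]] := positive_box HOopen (@subset_closure N Om) Hu Ha Oy uy ay.
  exists (box y rho); split; first exact: box_domain.
  by split=> x /Hbox [Ox [ux ax]].
- apply: False_ind (Hux0 _).
  apply: (subsolution_vanishes HN HOb Hq HF1 HF2 Hu Hu0 Hubd Hsub) => // y Oy uy.
  by apply: Rnot_lt_le => ay; apply: Hnone; exists y.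
Qed.
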